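(* Let $k>1$, let $f$ be a positive function, differentiable on $[0,1]$, and define $g(R)=\dfrac{k-1}{\frac{k-1}{k}-R}$ for $R\neq \frac{k-1}{k}$. Consider the planar system $$\frac{dI}{d\tau}=I\,[f(R)(1-I-R)-k],\qquad \frac{dR}{d\tau}=(k-1)I-R.$$ A point $(I^*,R^* )$ is an endemic equilibrium of this system if and only if $R^*\in\left(0,\frac{k-1}{k}\right)$, $I^*\in\left(0,\frac1k\right)$, $I^*=\frac{1}{k-1}R^*$, and $f(R^* )=g(R^* )$.
   Context: An endemic equilibrium is an equilibrium point $(I^*,R^* )$ of the system with $I^*>0$. *)

From Stdlib Require Import Reals.
From Coquelicot Require Import Coquelicot.
Open Scope R_scope.

Definition rhs_I (f : R -> R) (k I Rr : R) : R := I * (f Rr * (1 - I - Rr) - k).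
Definition rhs_R (k I Rr : R) : R := (k - 1) * I - Rr.

Definition g (k Rr : R) : R := (k - 1) / ((k - 1) / k - Rr).

(* Equilibrium point of the system; the state space is restricted to
   R in [0,1], the domain on which f is given. *)
Definition equilibrium (f : R -> R) (k I Rr : R) : Prop :=
  0 <= Rr <= 1 /\ rhs_I f k I Rr = 0 /\ rhs_R k I Rr = 0.

Definition endemic_equilibrium (f : R -> R) (k I Rr : R) : Prop :=
  equilibrium f k I Rr /\ 0 < I.

From Stdlib Require Import Reals Lra Psatz.
From Coquelicot Require Import Coquelicot.
Open Scope R_scope.

(* The R-nullcline forces I = R/(k-1), and on it the susceptible share
   1 - I - R equals k/(k-1) ((k-1)/k - R).  With I > 0 the I-equation then
   reads f(R) k/(k-1) ((k-1)/k - R) = k, i.e. f(R) = g(R); positivity of f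
   forces R < (k-1)/k, and the remaining bounds follow from I = R/(k-1). *)

Lemma rhs_I_eq0_pos (f : R -> R) (k I Rr : R) :
  0 < I -> rhs_I f k I Rr = 0 <-> f Rr * (1 - I - Rr) = k.
Proof.
  unfold rhs_I; intros HI; split.
  - intros H; destruct (Rmult_integral _ _ H); lra.
  - intros ->; ring.
Qed.

Section Nullclines.

Variable k : R.
Hypothesis hk : 1 < k.

Lemma rhs_R_eq0 (I Rr : R) : rhs_R k I Rr = 0 <-> I = 1 / (k - 1) * Rr.
Proof.
  unfold rhs_R; split; intros H.
  - field_simplify_eq; lra.
  - rewrite H; field; lra.
Qed.

Lemma susceptible_on_R_nullcline (Rr : R) :
  1 - 1 / (k - 1) * Rr - Rr = k / (k - 1) * ((k - 1) / k - Rr).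
Proof. field; lra. Qed.

Lemma eq_g_iff (y Rr : R) :
  Rr <> (k - 1) / k ->
  y = g k Rr <-> y * (k / (k - 1) * ((k - 1) / k - Rr)) = k.
Proof.
  unfold g; intros HR.
  assert (Hd : k - 1 - Rr * k <> 0).
  { intros E; apply HR; field_simplify_eq; lra. }
  split; intros H.
  - rewrite H; field; repeat split; lra.
  - apply Rmult_eq_reg_r with (k / (k - 1) * ((k - 1) / k - Rr)).
    + rewrite H; field; repeat split; lra.
    + apply Rmult_integral_contrapositive_currified; [|lra].
      apply Rgt_not_eq, Rdiv_lt_0_compat; lra.
Qed.

Lemma lt_threshold_of_pos (y Rr : R) :
  0 < y -> y * (k / (k - 1) * ((k - 1) / k - Rr)) = k -> Rr < (k - 1) / k.
Proof.
  intros Hy H.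
  assert (Hc : 0 < y * (k / (k - 1))) by (apply Rmult_lt_0_compat, Rdiv_lt_0_compat; lra).
  set (d := (k - 1) / k - Rr) in H.
  assert (0 < d) by nra.
  unfold d in *; lra.
Qed.

Lemma threshold_lt1 : (k - 1) / k < 1.
Proof. apply Rmult_lt_reg_r with k; [lra|]; field_simplify; lra. Qed.

Lemma lt_inv_of_lt_threshold (Rr : R) :
  Rr < (k - 1) / k -> 1 / (k - 1) * Rr < 1 / k.
Proof.
  intros H.
  replace (1 / k) with (1 / (k - 1) * ((k - 1) / k)) by (field; lra).
  apply Rmult_lt_compat_l; [apply Rdiv_lt_0_compat|]; lra.
Qed.

End Nullclines.

Theorem theorem1 (k : R) (f : R -> R)
  (hk : 1 < k)
  (hpos : forall x, 0 <= x <= 1 -> 0 < f x)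
  (hdiff : forall x, 0 <= x <= 1 -> ex_derive f x)
  (Is Rs : R) :
  endemic_equilibrium f k Is Rs <->
  (0 < Rs < (k - 1) / k /\ 0 < Is < 1 / k /\ Is = 1 / (k - 1) * Rs /\
   f Rs = g k Rs).
Proof.
  unfold endemic_equilibrium, equilibrium.
  assert (Hk1 : 0 < k - 1) by lra.
  split.
  - intros [[HR [HdI HdR]] HI].
    apply rhs_I_eq0_pos in HdI; [|exact HI].
    apply (rhs_R_eq0 k hk) in HdR.
    rewrite HdR, susceptible_on_R_nullcline in HdI by exact hk.
    assert (HRs : Rs < (k - 1) / k) by exact (lt_threshold_of_pos k hk _ _ (hpos Rs HR) HdI).
    assert (HRpos : 0 < Rs).
    { replace Rs with ((k - 1) * Is) by (rewrite HdR; field; lra).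
      apply Rmult_lt_0_compat; lra. }
    rewrite HdR; repeat split; try lra.
    + exact (lt_inv_of_lt_threshold k hk Rs HRs).
    + apply eq_g_iff; [exact hk | lra | exact HdI].
  - intros [[HR0 HR1] [[HI0 _] [HIs Hf]]].
    pose proof (threshold_lt1 k hk).
    split; [|exact HI0]; split; [lra|]; split.
    + apply rhs_I_eq0_pos; [exact HI0|].
      rewrite HIs, susceptible_on_R_nullcline by exact hk.
      apply eq_g_iff; [exact hk | lra | exact Hf].
    + apply rhs_R_eq0; [exact hk | exact HIs].
Qed.
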